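(* Let $X$ be a compact topological space, let $D\subseteq X$, let $\overline{D}$ be the closure of $D$ in $X$, and put $\partial D:=\overline{D}\setminus D$. Let $Y$ be a Hausdorff topological space and let $f\colon\overline{D}\to Y$ be a continuous map such that $f(D)$ is open in $Y$. Let $E$ be any connected subset of $Y\setminus f(\partial D)$. Then either $E\subseteq f(D)$ or $f(\overline{D})\subseteq Y\setminus E$.
   Context: Note that $\partial D$ is defined as $\overline{D}\setminus D$ (which coincides with the usual boundary when $D$ is open). *)

From HB Require Import structures.
From mathcomp Require Import all_boot all_order all_algebra.
From mathcomp Require Import all_classical all_reals all_analysis.

From HB Require Import structures.
From mathcomp Require Import all_boot all_order all_algebra.
From mathcomp Require Import all_classical all_reals all_analysis.
Local Open Scope classical_set_scope.

(* f(D) is open and f(closure D) is compact, hence closed.  Away from f(∂D)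
   the two sets coincide, so their common trace on E is clopen in E; by
   connectedness it is either all of E or empty. *)

Lemma setI_image_closure {X Y : topologicalType} {D : set X} {f : X -> Y}
    {E : set Y} :
  E `<=` ~` (f @` (closure D `\` D)) ->
  E `&` f @` D = E `&` f @` closure D.
Proof.
move=> Ebd; apply/seteqP; split=> y [Ey [x Dx fxy]]; split=> //; exists x => //.
  exact: subset_closure.
by apply: contrapT => nDx; apply: (Ebd _ Ey); exists x.
Qed.

Lemma closed_image_closure {X Y : topologicalType} {D : set X} {f : X -> Y} :
  compact [set: X] -> hausdorff_space Y ->
  {within closure D, continuous f} -> closed (f @` closure D).
Proof.
move=> cX hY cf; apply: compact_closed => //; apply: continuous_compact => //.
exact: subclosed_compact (@closed_closure _ D) cX _.
Qed.

Lemma connected_subset_or_disjoint {T : topologicalType} {E A B : set T} :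
  connected E -> open A -> closed B -> E `&` A = E `&` B ->
  E `<=` A \/ E `&` A = set0.
Proof.
move=> cE oA cB EAB.
have [[y EAy]|/set0P/negP/negPn/eqP] := pselect (E `&` A !=set0); last by right.
left; have EAE : E `&` A = E by apply: cE; [exists y | exists A | exists B].
by rewrite -EAE => z [].
Qed.

Theorem mainTheorem1 (X Y : topologicalType) (D : set X) (f : X -> Y) (E : set Y) :
  compact [set: X] ->
  hausdorff_space Y ->
  {within closure D, continuous f} ->
  open (f @` D) ->
  connected E ->
  E `<=` ~` (f @` (closure D `\` D)) ->
  E `<=` f @` D \/ f @` closure D `<=` ~` E.
Proof.
move=> cX hY cf oD cE Ebd.
have EDcl := setI_image_closure Ebd.
have [EsubD|ED0] := connected_subset_or_disjoint cE oD
  (closed_image_closure cX hY cf) EDcl; [by left | right].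
move=> y fy Ey; have : (E `&` f @` closure D) y by [].
by rewrite -EDcl ED0.
Qed.
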